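(* Let $t,t'\in B_n$ with $t\neq t'$ and let $G$ be a digraph such that $\mathbb{A}(G)$ satisfies $t\approx t'$. Then $O_G\le Y_{t,t'}+1$.
   Context: Digraphs $G=(V,E)$ have $E\subseteq V\times V$, loops allowed, possibly infinite. $\mathbb{A}(G)$ is the groupoid on $V\cup\{\infty\}$ with $xy=x$ if $x,y\in V$, $(x,y)\in E$, and $xy=\infty$ otherwise. $B_n$: binary terms with $x_1,\dots,x_n$ each occurring once in this order; $G(t)$: rooted tree defined by $G(x_i)$ a single vertex and $G(t_1t_2)=G(t_1)\cup G(t_2)$ plus an edge from the leftmost variable of $t_1$ to that of $t_2$; root $x_1$. For a rooted tree $T$, $T_x$ is the rooted induced subtree of $x$ and its descendants, $h$ denotes height. With $T=G(t)$, $T'=G(t')$: $Y_{t,t'}$ is the largest integer $m$ such that for all $x$, if $h(T_x)\le m$ or $h(T'_x)\le m$ then $T_x=T'_x$. A strongly connected component (SCC) is trivial if it is a single vertex without a loop, nontrivial otherwise. A path $v_0\to\dots\to v_\ell$ is an outlet from a nontrivial SCC $K$ if $v_0\in K$ and $v_1,\dots,v_\ell$ lie in trivial SCCs. $O_G$ is the maximal length of an outlet ($\infty$ if unbounded, $-\infty$ if none). *)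

From mathcomp Require Import all_boot all_order all_algebra.
From Stdlib Require Import ClassicalEpsilon Relations.
Set Implicit Arguments. Unset Strict Implicit. Unset Printing Implicit Defensive.
Import Order.TTheory GRing.Theory Num.Theory.

Inductive term : Type := Var of nat | Mul of term & term.

Fixpoint vars (t : term) : seq nat :=
  match t with Var i => [:: i] | Mul a b => vars a ++ vars b end.

Definition inB (n : nat) (t : term) : Prop := vars t = iota 1 n.

Fixpoint leftmost (t : term) : nat :=
  match t with Var i => i | Mul a _ => leftmost a end.

(* edge relation of the rooted tree G(t) (vertices = variable indices) *)
Fixpoint tedge (t : term) (x y : nat) : bool :=
  match t with
  | Var _ => false
  | Mul a b => [|| tedge a x y, tedge b x y | (x == leftmost a) && (y == leftmost b)]
  end.

Inductive walk (e : rel nat) : nat -> nat -> nat -> Prop :=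
  | walk0 x : walk e x x 0
  | walkS x y z k : e x y -> walk e y z k -> walk e x z k.+1.

(* y is a descendant of x (or x itself) in G(t), i.e. a vertex of G(t)_x *)
Definition desc (t : term) (x y : nat) : Prop := exists k, walk (tedge t) x y k.

Definition height_le (t : term) (x : nat) (m : int) : Prop :=
  forall y k, walk (tedge t) x y k -> (k%:Z <= m)%R.

(* G(t)_x = G(t')_x as rooted (induced) subtrees with root x *)
Definition subtree_eq (t t' : term) (x : nat) : Prop :=
  (forall y, desc t x y <-> desc t' x y) /\
  (forall y z, desc t x y -> desc t x z -> tedge t y z = tedge t' y z).

(* the defining property of m in the definition of Y_{t,t'} *)
Definition Ycond (t t' : term) (m : int) : Prop :=
  forall x, x \in vars t ->
    (height_le t x m \/ height_le t' x m) -> subtree_eq t t' x.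

Definition isY (t t' : term) (Y : int) : Prop :=
  Ycond t t' Y /\ forall m, Ycond t t' m -> (m <= Y)%R.

(* carrier option V, with None playing the role of infinity *)
Definition gop (V : Type) (E : V -> V -> Prop) (a b : option V) : option V :=
  match a, b with
  | Some x, Some y => if excluded_middle_informative (E x y) then Some x else None
  | _, _ => None
  end.

Fixpoint eval (V : Type) (E : V -> V -> Prop) (env : nat -> option V) (t : term)
  : option V :=
  match t with
  | Var i => env i
  | Mul a b => gop E (eval E env a) (eval E env b)
  end.

Definition satisfies (V : Type) (E : V -> V -> Prop) (t t' : term) : Prop :=
  forall env : nat -> option V, eval E env t = eval E env t'.

Definition reach (V : Type) (E : V -> V -> Prop) : V -> V -> Prop :=
  clos_refl_trans V E.

Definition trivial_scc (V : Type) (E : V -> V -> Prop) (v : V) : Prop :=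
  (forall u, reach E v u -> reach E u v -> u = v) /\ ~ E v v.

Fixpoint is_path (V : Type) (E : V -> V -> Prop) (x : V) (s : seq V) : Prop :=
  match s with
  | [::] => True
  | y :: s' => E x y /\ is_path E y s'
  end.

(* v0 -> v1 -> ... -> vl (with s = [:: v1; ...; vl]) is an outlet from the
   nontrivial SCC of v0; its length is size s *)
Definition outlet (V : Type) (E : V -> V -> Prop) (v0 : V) (s : seq V) : Prop :=
  ~ trivial_scc E v0 /\ is_path E v0 s /\ List.Forall (trivial_scc E) s.

From mathcomp Require Import all_boot all_order all_algebra zify.
From Stdlib Require Import ClassicalEpsilon Relations.
Import Order.TTheory GRing.Theory Num.Theory.
Set Implicit Arguments. Unset Strict Implicit. Unset Printing Implicit Defensive.

(* Homomorphisms G(t) -> G are exactly the assignments of vertices to the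
   variables under which t does not evaluate to infinity, so t ~ t' makes
   G(t) and G(t') have the same homomorphisms into G.  Take an outlet
   v0 -> v1 -> ... -> vl with l > Y + 1 and a vertex x whose subtree in G(t)
   has height at most Y + 1.  Mapping G(t)_x along the outlet by depth (x to
   v1) and every other vertex of G(t) onto a closed walk through v0 in the SCC
   of v0, timed so that the parent of x lands on v0, gives a homomorphism of
   G(t), hence of G(t').  As v1 lies in a trivial SCC, no edge of G(t') can
   lead from x back to the cycle: every child of x in G(t') is a descendant of
   x in G(t).  The children of x in G(t) have height at most Y, so their
   subtrees agree in G(t) and G(t'), and this forces G(t)_x = G(t')_x.  Hence
   Y + 1 also has the defining property of Y_{t,t'}, a contradiction. *)

Lemma walk_snoc (e : rel nat) a b c k : walk e a b k -> e b c -> walk e a c k.+1.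
Proof.
elim=> [x|x y z {}k exy _ IH] ebc; first exact: walkS ebc (walk0 _ _).
exact: walkS exy (IH ebc).
Qed.

Section Descendants.
Variable t : term.

Lemma desc_refl x : desc t x x.
Proof. by exists 0; constructor. Qed.

Lemma desc_cons a b c : tedge t a b -> desc t b c -> desc t a c.
Proof. by move=> eab [k w]; exists k.+1; apply: walkS eab w. Qed.

Lemma desc_step a b c : desc t a b -> tedge t b c -> desc t a c.
Proof. by move=> [k w] ebc; exists k.+1; apply: walk_snoc w ebc. Qed.

Lemma descP a b : desc t a b -> a = b \/ exists2 c, tedge t a c & desc t c b.
Proof.
case=> k; case=> [x|x y z {}k exy w]; first by left.
by right; exists y => //; exists k.
Qed.

Lemma desc_last a b : desc t a b -> a = b \/ exists2 z, desc t a z & tedge t z b.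
Proof.
case=> k; elim=> [x|x y z {}k exy _ [<-|[z' dyz' ez'z]]]; [by left | right..].
- by exists x => //; apply: desc_refl.
- by exists z' => //; apply: desc_cons exy dyz'.
Qed.

End Descendants.

Lemma leftmost_vars t : leftmost t \in vars t.
Proof. by elim: t => [i|a IHa b _] /=; rewrite ?inE ?mem_cat ?IHa. Qed.

Lemma tedge_vars t a b : tedge t a b -> (a \in vars t) && (b \in vars t).
Proof.
elim: t => [//|t1 IH1 t2 IH2] /=; rewrite !mem_cat.
case/or3P=> [/IH1/andP[-> ->]|/IH2/andP[-> ->]|/andP[/eqP-> /eqP->]];
  by rewrite ?leftmost_vars ?orbT.
Qed.

Lemma uniq_vars_Mul t1 t2 : uniq (vars (Mul t1 t2)) ->
  [/\ uniq (vars t1), uniq (vars t2) & forall w, w \in vars t2 -> w \notin vars t1].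
Proof. by rewrite /= cat_uniq => /and3P[u1 /hasPn D u2]; split=> // w /D. Qed.

Fixpoint depth (t : term) (w : nat) : nat :=
  match t with
  | Var _ => 0
  | Mul a b => if w \in vars b then (depth b w).+1 else depth a w
  end.

Fixpoint parent (t : term) (w : nat) : nat :=
  match t with
  | Var _ => w
  | Mul a b =>
      if w \in vars b then (if w == leftmost b then leftmost a else parent b w)
      else parent a w
  end.

Lemma depth_leftmost t : uniq (vars t) -> depth t (leftmost t) = 0.
Proof.
elim: t => [//|t1 IH1 t2 _] /uniq_vars_Mul[u1 _ D] /=.
have -> : (leftmost t1 \in vars t2) = false by apply/negP => /D; rewrite leftmost_vars.
exact: IH1.
Qed.

Lemma depth_tedge t a b : uniq (vars t) -> tedge t a b -> depth t b = (depth t a).+1.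
Proof.
elim: t a b => [//|t1 IH1 t2 IH2] a b /uniq_vars_Mul[u1 u2 D] /=.
have out2 w : w \in vars t1 -> (w \in vars t2) = false.
  by move=> w1; apply/negP => /D; rewrite w1.
case/or3P=> [e|e|/andP[/eqP-> /eqP->]].
- by case/andP: (tedge_vars e) => /out2 -> /out2 ->; apply: IH1.
- by case/andP: (tedge_vars e) => -> ->; rewrite (IH2 _ _ u2 e).
- by rewrite leftmost_vars out2 ?leftmost_vars // !depth_leftmost.
Qed.

Lemma tedge_parent t a b : uniq (vars t) -> tedge t a b -> a = parent t b.
Proof.
elim: t a b => [//|t1 IH1 t2 IH2] a b /uniq_vars_Mul[u1 u2 D] /=.
case/or3P=> [e|e|/andP[/eqP-> /eqP->]].
- case/andP: (tedge_vars e) => _ b1.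
  have -> : (b \in vars t2) = false by apply/negP => /D; rewrite b1.
  exact: IH1.
- case/andP: (tedge_vars e) => _ ->.
  have -> : (b == leftmost t2) = false.
    by apply/eqP => eb; move: (depth_tedge u2 e); rewrite eb depth_leftmost.
  exact: IH2.
- by rewrite leftmost_vars eqxx.
Qed.

Section UniqueVariables.
Variable t : term.
Hypothesis t_uniq : uniq (vars t).

Lemma tedge_parent_uniq a a' b : tedge t a b -> tedge t a' b -> a = a'.
Proof. by move=> /(tedge_parent t_uniq)-> /(tedge_parent t_uniq)->. Qed.

Lemma depth_walk a b k : walk (tedge t) a b k -> depth t b = depth t a + k.
Proof.
elim=> [x|x y z {}k exy _ ->]; first by rewrite addn0.
by rewrite (depth_tedge t_uniq exy) addSnnS.
Qed.

Lemma depth_desc a b : desc t a b -> depth t a <= depth t b.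
Proof. by case=> k /depth_walk->; apply: leq_addr. Qed.

Lemma desc_parent x a b : desc t x b -> tedge t a b -> b = x \/ desc t x a.
Proof.
case/desc_last=> [<-|[z dxz ezb]] eab; first by left.
by right; rewrite (tedge_parent_uniq eab ezb).
Qed.

Lemma height_le_depth x m w :
  height_le t x m -> desc t x w -> ((depth t w - depth t x)%:Z <= m)%R.
Proof. by move=> hx [k w']; rewrite (depth_walk w') addKn; apply: hx w'. Qed.

End UniqueVariables.

Lemma height_le_child t x c m : height_le t x (m + 1) -> tedge t x c -> height_le t c m.
Proof. by move=> hx exc y k w; have := hx y k.+1 (walkS exc w); lia. Qed.

Lemma subtree_eq_sym t t' x : subtree_eq t t' x -> subtree_eq t' t x.
Proof.
move=> [dx ex]; split=> [y|y z dy dz]; first by split=> /dx.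
by rewrite ex //; apply/dx.
Qed.

Lemma walk_subtree_eq t t' y z k :
  subtree_eq t t' y -> walk (tedge t') y z k -> walk (tedge t) y z k.
Proof.
move=> [dy ey]; suff: forall a, desc t' y a -> walk (tedge t') a z k -> walk (tedge t) a z k.
  by apply; apply: desc_refl.
move=> a dya w; elim: w dya => [{}a|{}a b {}z {}k eab _ IH] dya; first by constructor.
apply: walkS (IH (desc_step dya eab)).
by rewrite ey //; apply/dy => //; apply: desc_step dya eab.
Qed.

Lemma subtree_eq_children t t' x :
  (forall c, tedge t x c = tedge t' x c) ->
  (forall c, tedge t x c -> subtree_eq t t' c) -> subtree_eq t t' x.
Proof.
move=> ex eqc; split=> [z|y z].
  split=> /descP[<-|[c ec dcz]]; try exact: desc_refl.
    by apply: (desc_cons (_ : tedge t' x c)); [rewrite -ex | apply/(eqc c ec).1].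
  have ec' : tedge t x c by rewrite ex.
  by apply: (desc_cons ec'); apply/(eqc c ec').1.
case/descP=> [<- _|[c ec dcy] _]; first exact: ex.
have [dc ed] := eqc c ec.
have [dcz|ndcz] := classic (desc t c z); first exact: ed.
apply/idP/idP => e; case: ndcz; first exact: desc_step dcy e.
by apply/dc; apply: desc_step e; apply/dc.
Qed.

Lemma tedge_of_child_desc t t' x y : uniq (vars t) -> uniq (vars t') ->
  (forall c, tedge t x c -> subtree_eq t t' c) ->
  tedge t' x y -> desc t x y -> tedge t x y.
Proof.
move=> ut ut' eqc ey /descP[exy|[c ec dcy]].
  by move: (depth_tedge ut' ey); rewrite exy; lia.
have [dc _] := eqc c ec.
case/dc/desc_last: dcy => [<- //|[z dcz ezy]].
rewrite (tedge_parent_uniq ut' ezy ey) -dc in dcz.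
by have := depth_desc ut dcz; rewrite (depth_tedge ut ec); lia.
Qed.

Lemma height_le_children t t' x m :
  (forall c, tedge t x c -> subtree_eq t t' c) ->
  (forall y, tedge t' x y -> tedge t x y) ->
  height_le t x m -> height_le t' x m.
Proof.
move=> + + + z k w; case: w => [{}x|{}x c {}z {}k exc wcz] eqc sub hx.
  exact: hx (walk0 _ _).
have ec := sub c exc.
exact: hx z k.+1 (walkS ec (walk_subtree_eq (eqc c ec) wcz)).
Qed.

Lemma Ycond_child t t' Y x c :
  Ycond t t' Y -> height_le t x (Y + 1) -> tedge t x c -> subtree_eq t t' c.
Proof.
move=> hY hx ec; apply: hY; first by case/andP: (tedge_vars ec).
by left; apply: height_le_child hx ec.
Qed.

Lemma Ycond_sym t t' Y : vars t =i vars t' -> Ycond t t' Y -> Ycond t' t Y.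
Proof.
move=> vt hY x xt' hx; apply/subtree_eq_sym/hY; first by rewrite vt.
by case: hx; [right | left].
Qed.

Section TreeHomomorphisms.
Variables (V : Type) (E : V -> V -> Prop).

Definition tree_hom (t : term) (f : nat -> V) : Prop :=
  forall a b, tedge t a b -> E (f a) (f b).

Lemma tree_hom_eval t f :
  tree_hom t f -> eval E (fun i => Some (f i)) t = Some (f (leftmost t)).
Proof.
elim: t => [//|t1 IH1 t2 IH2] hf /=.
have h1 : tree_hom t1 f by move=> a b e; apply: hf; rewrite /= e.
have h2 : tree_hom t2 f by move=> a b e; apply: hf; rewrite /= e orbT.
rewrite (IH1 h1) (IH2 h2) /=; case: excluded_middle_informative => // [[]].
by apply: hf; rewrite /= !eqxx !orbT.
Qed.

Lemma eval_Some_tree_hom t f v :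
  eval E (fun i => Some (f i)) t = Some v -> v = f (leftmost t) /\ tree_hom t f.
Proof.
elim: t v => [i|t1 IH1 t2 IH2] v /=; first by case=> <-.
case e1: (eval _ _ t1) => [v1|] //; case e2: (eval _ _ t2) => [v2|] //=.
have [-> h1] := IH1 _ e1; have [-> h2] := IH2 _ e2.
case: excluded_middle_informative => // e12 [<-]; split=> // a b.
by case/or3P=> [/h1|/h2|/andP[/eqP-> /eqP->]].
Qed.

Lemma satisfies_tree_hom t t' f : satisfies E t t' -> tree_hom t f -> tree_hom t' f.
Proof. by move=> sat /tree_hom_eval; rewrite sat => /eval_Some_tree_hom[]. Qed.

Lemma satisfies_sym t t' : satisfies E t t' -> satisfies E t' t.
Proof. by move=> sat env; rewrite sat. Qed.

End TreeHomomorphisms.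

Section StronglyConnectedComponents.
Variables (V : Type) (E : V -> V -> Prop).

Lemma nontrivial_sccP v : ~ trivial_scc E v <-> exists2 w, E v w & reach E w v.
Proof.
split=> [ntv | [w evw rwv] [scc_v noloop]]; last first.
  by apply: noloop; rewrite -{2}(scc_v w (rt_step _ _ _ _ evw) rwv).
apply: NNPP => noret; apply: ntv; split=> [u rvu|evv]; last first.
  by apply: noret; exists v => //; apply: rt_refl.
have {rvu} := clos_rt_rt1n _ _ _ _ rvu; case=> [//|y {}u evy ryu ruv]; case: noret.
by exists y => //; apply: rt_trans (clos_rt1n_rt _ _ _ _ ryu) ruv.
Qed.

Lemma reach_walk_fun a b : reach E a b ->
  exists k (c : nat -> V), [/\ c 0 = a, c k = b & forall i, i < k -> E (c i) (c i.+1)].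
Proof.
move=> rab; have {rab} := clos_rt_rt1n _ _ _ _ rab.
elim=> [x|x y z exy _ [k [c [c0 ck ec]]]]; first by exists 0, (fun=> x).
exists k.+1, (fun i => if i is i'.+1 then c i' else x); split=> //.
by case=> [|i] /= ?; [rewrite c0 | apply: ec].
Qed.

Lemma nontrivial_scc_walk v : ~ trivial_scc E v -> forall d,
  exists g : nat -> V, [/\ forall k, E (g k) (g k.+1), g d = v & forall k, reach E (g k) v].
Proof.
move=> /nontrivial_sccP[w evw /reach_walk_fun[p [c [c0 cp ec]]]] d.
pose cyc i := if i is i'.+1 then c i' else v.
have cyc_edge i : i <= p -> E (cyc i) (cyc i.+1).
  by case: i => [|i] /= ?; [rewrite c0 | apply: ec].
have cyc_mod i : i <= p.+1 -> cyc (i %% p.+1) = cyc i.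
  by rewrite leq_eqVlt => /orP[/eqP->|/modn_small->]; rewrite ?modnn /= ?cp.
have cyc_reach j i : i + j = p.+1 -> reach E (cyc i) v.
  elim: j i => [|j IH] i; first by rewrite addn0 => ->; rewrite /= cp; apply: rt_refl.
  by move=> ij; apply: rt_trans (rt_step _ _ _ _ (cyc_edge i _)) (IH i.+1 _); lia.
(* Run periodically around the closed walk [cyc], in phase so that time [d] is at [v]. *)
exists (fun k => cyc ((k + p * d) %% p.+1)); split=> [k||k].
- have lt_p : (k + p * d) %% p.+1 < p.+1 := ltn_pmod _ (ltn0Sn p).
  have -> : (k.+1 + p * d) %% p.+1 = ((k + p * d) %% p.+1 + 1) %% p.+1.
    by rewrite modnDml addn1 addSn.
  by rewrite addn1 (cyc_mod _.+1) //; apply: cyc_edge.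
- by rewrite -mulSn modnMr.
- apply: (cyc_reach (p.+1 - (k + p * d) %% p.+1)).
  by have := ltn_pmod (k + p * d) (ltn0Sn p); lia.
Qed.

Lemma is_path_nth d x s i : is_path E x s -> i < size s -> E (nth d (x :: s) i) (nth d s i).
Proof. by elim: s x i => [//|y s IH] x [|i] /= [exy ps] // ?; apply: IH. Qed.

End StronglyConnectedComponents.

Section Outlets.
Variables (V : Type) (E : V -> V -> Prop).

Lemma subtree_outlet_hom t x (m : int) v0 s :
  uniq (vars t) -> height_le t x m -> ~ trivial_scc E v0 -> is_path E v0 s ->
  (m < (size s)%:Z)%R ->
  exists f, [/\ tree_hom E t f, f x = nth v0 s 0
              & forall w, ~ desc t x w -> reach E (f w) v0].
Proof.
move=> ut hx ntv0 ps long.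
have [g [eg gx rg]] := nontrivial_scc_walk ntv0 (depth t x).
pose f w := if excluded_middle_informative (desc t x w)
            then nth v0 s (depth t w - depth t x) else g (depth t w).+1.
exists f; split=> [a b eab||w nxw]; rewrite /f.
- have dab := depth_tedge ut eab.
  case: (excluded_middle_informative (desc t x a)) => [xa|nxa];
    case: (excluded_middle_informative (desc t x b)) => [xb|nxb] /=.
  + have := height_le_depth ut hx xb; rewrite dab subSn ?(depth_desc ut xa) // => hb.
    by apply: (is_path_nth v0 (i := (depth t a - depth t x).+1) ps); lia.
  + by case: nxb; apply: (desc_step xa eab).
  + have [bx|//] := desc_parent ut xb eab.
    have m0 := hx x 0 (walk0 _ x).
    by rewrite -dab bx gx subnn; apply: (is_path_nth v0 (i := 0) ps); lia.
  + by rewrite dab; apply: eg.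
- case: (excluded_middle_informative (desc t x x)) => [_|[]] /=; last exact: desc_refl.
  by rewrite subnn.
- by case: (excluded_middle_informative (desc t x w)) => [//|_] /=; apply: rg.
Qed.

Lemma outlet_child_desc t t' x m v0 s y :
  uniq (vars t) -> satisfies E t t' -> height_le t x m -> outlet E v0 s ->
  (m < (size s)%:Z)%R -> tedge t' x y -> desc t x y.
Proof.
move=> ut sat hx [ntv0 [ps triv]] long ey.
have [f [hf fx rf]] := subtree_outlet_hom ut hx ntv0 ps long.
have [//|nxy] := classic (desc t x y).
case: s ps triv long fx => [_ _ long _|v1 s [ev01 _] triv _ fx].
  by have := hx x 0 (walk0 _ x); rewrite /= in long; lia.
have tv1 := List.Forall_inv triv.
have := satisfies_tree_hom sat hf ey; rewrite fx => ev1fy.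
case: ((nontrivial_sccP E v1).2 ^~ tv1); exists (f y) => //.
exact: rt_trans (rf y nxy) (rt_step _ _ _ _ ev01).
Qed.

Lemma outlet_subtree_eq t t' Y x v0 s :
  uniq (vars t) -> uniq (vars t') -> satisfies E t t' -> Ycond t t' Y ->
  height_le t x (Y + 1) -> outlet E v0 s -> (Y + 1 < (size s)%:Z)%R ->
  subtree_eq t t' x.
Proof.
move=> ut ut' sat hY hx out long.
have eqc c : tedge t x c -> subtree_eq t t' c := Ycond_child hY hx.
have sub' y : tedge t' x y -> tedge t x y.
  move=> ey; apply: (tedge_of_child_desc ut ut' eqc ey).
  exact: outlet_child_desc ut sat hx out long ey.
have hx' : height_le t' x (Y + 1) := height_le_children eqc sub' hx.
have eqc' c : tedge t' x c -> subtree_eq t' t c by move/sub'/eqc/subtree_eq_sym.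
have sub c : tedge t x c -> tedge t' x c.
  move=> ec; apply: (tedge_of_child_desc ut' ut eqc' ec).
  exact: outlet_child_desc ut' (satisfies_sym sat) hx' out long ec.
by apply: subtree_eq_children => // c; apply/idP/idP => [/sub|/sub'].
Qed.

End Outlets.

Unset Implicit Arguments.

Theorem lemma6p10 (n : nat) (t t' : term) (V : Type) (E : V -> V -> Prop) :
  inB n t -> inB n t' -> t <> t' -> satisfies E t t' ->
  forall Y : int, isY t t' Y ->
  forall (v0 : V) (s : seq V), outlet E v0 s -> ((size s)%:Z <= Y + 1)%R.
Proof.
move=> Bt Bt' _ sat Y [hY maxY] v0 s out.
have ut : uniq (vars t) by rewrite Bt iota_uniq.
have ut' : uniq (vars t') by rewrite Bt' iota_uniq.
have vt : vars t =i vars t' by rewrite Bt Bt'.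
rewrite leNgt; apply/negP => long.
suff /maxY : Ycond t t' (Y + 1) by lia.
move=> x _ [hx|hx']; first exact: outlet_subtree_eq ut ut' sat hY hx out long.
apply: subtree_eq_sym.
exact: outlet_subtree_eq ut' ut (satisfies_sym sat) (Ycond_sym vt hY) hx' out long.
Qed.
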